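(* Let $N\ge 2$ and fix real $\Omega\neq 0$ and real $\delta$. For each real coupling family $J=(J_{i,j})_{1\le i<j\le N}$, let $|\Psi_J\rangle$ be the ground state of $$\hat{H}_J = \Omega \sum_{i=1}^N \hat{\sigma}_i^x + \delta \sum_{i=1}^N \hat{\sigma}_i^z + \sum_{1\le i<j\le N} J_{i,j} \hat{\sigma}_i^z \hat{\sigma}_j^z$$ (which is unique up to phase since $\Omega\ne0$), and define the correlation functions $c_{i,j}(J)=\langle\Psi_J|\hat{S}_i^z \hat{S}_j^z|\Psi_J\rangle$ for $1\le i<j\le N$. Then the map $J\mapsto c(J)=(c_{i,j}(J))_{1\le i<j\le N}$ is injective; hence it is a bijection between the set of all real coupling families $J$ and the set of $J$-representable correlation families (its image). That is, if $c(J^{(1)})=c(J^{(2)})$ then $J^{(1)}=J^{(2)}$.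
   Context: $\hat\sigma_i^x,\hat\sigma_i^z$ are Pauli matrices acting on the $i$-th factor of $(\mathbb{C}^2)^{\otimes N}$, and $\hat S_i^z=\frac{\hbar}{2}\hat\sigma_i^z$ is the spin-$z$ operator on site $i$. A family $(c_{i,j})_{i<j}$ is called $J$-representable if it equals $c(J)$ for some real coupling family $J$, i.e. it arises as the ground-state two-point $z$-correlations of $\hat H_J$ for some choice of $J$ (with the given fixed $\Omega,\delta$). *)

From mathcomp Require Import all_boot all_algebra.
From mathcomp Require Import reals.
From mathcomp Require Export complex.
Set Implicit Arguments. Unset Strict Implicit. Unset Printing Implicit Defensive.
Import GRing.Theory Num.Theory.
Local Open Scope ring_scope.
Local Open Scope complex_scope.

(* Computational basis of (C^2)^{\otimes N}: a basis vector |s_1 ... s_N>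
   is a function s : 'I_N -> bool; bit false = |0> (sigma^z = +1),
   bit true = |1> (sigma^z = -1). *)
Definition basis (N : nat) := {ffun 'I_N -> bool}.

Section Spin.
Variables (R : realType) (N : nat).
Local Notation C := R[i].
Local Notation vec := (basis N -> C).

Definition flip (i : 'I_N) (s : basis N) : basis N :=
  [ffun k => if k == i then ~~ s k else s k].

Definition sigx (i : 'I_N) (v : vec) : vec := fun s => v (flip i s).
Definition sigz (i : 'I_N) (v : vec) : vec :=
  fun s => (if s i then -1 else 1) * v s.
Definition Sz (hbar : R) (i : 'I_N) (v : vec) : vec :=
  fun s => (hbar / 2)%:C * sigz i v s.

Definition ham (Om del : R) (J : 'I_N -> 'I_N -> R) (v : vec) : vec :=
  fun s => Om%:C * (\sum_(i < N) sigx i v s)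
         + del%:C * (\sum_(i < N) sigz i v s)
         + \sum_(i < N) \sum_(j < N | (i < j)%N) (J i j)%:C * sigz i (sigz j v) s.

Definition braket (u v : vec) : C := \sum_(s : basis N) (u s)^* * v s.

Definition eigenpair (H : vec -> vec) (E : C) (v : vec) : Prop :=
  (exists s, v s != 0) /\ forall s, H v s = E * v s.

Definition ground_state (H : vec -> vec) (psi : vec) : Prop :=
  braket psi psi = 1 /\
  exists E, eigenpair H E psi /\
    forall E' phi, eigenpair H E' phi -> E <= E'.

Definition corr (hbar : R) (psi : vec) (i j : 'I_N) : C :=
  braket psi (Sz hbar i (Sz hbar j psi)).

End Spin.

(* A ground state of [ham Om del J] vanishes nowhere: the real vector
   [(-sg Om)^(number of down spins) * |psi|] has the same norm and no larger
   energy (each hopping term becomes [-|Om| |psi s| |psi (flip i s)|]), so it is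
   again a ground state, and its eigenvalue equation at a zero of [psi] forces
   [psi] to vanish at every neighbouring configuration, hence everywhere.
   Next, [ham Om del J1 - ham Om del J2] is the diagonal operator
   [D = sum_(i<j) (J1 - J2)_ij sigz_i sigz_j], whose expectation value is fixed
   by the zz-correlations.  Using each ground state as a trial state for the
   other Hamiltonian gives [E1 <= E2 + <D>] and [E2 <= E1 - <D>], so [psi2] is
   also a ground state of [ham Om del J1] and [D psi2 = (E1 - E2) psi2].  As
   [psi2] has full support, [D] is constant, and the alternating sum of [D] over
   the four configurations where only spins [i] and [j] may be flipped is
   [4 (J1 - J2)_ij]. *)

From mathcomp Require Import all_boot all_order all_algebra.
From mathcomp Require Import reals complex spectral sesquilinear.
From mathcomp Require Import ring zify.
Import Order.TTheory GRing.Theory Num.Theory.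
Local Open Scope complex_scope.
Local Open Scope ring_scope.
Local Open Scope sesquilinear_scope.
Set Implicit Arguments. Unset Strict Implicit. Unset Printing Implicit Defensive.

Lemma real_complex_real (R : rcfType) (x : R) : x%:C \is Num.real.
Proof. by apply/complex_realP; exists x. Qed.

Section HermitianForm.
Variables (C : numClosedFieldType) (n : nat) (M : 'M[C]_n).
Hypothesis M_herm : M \is hermsymmx.
Local Notation P := (spectralmx M).
Local Notation d := (spectral_diag M).

Lemma spectral_decomp : M = P^t* *m diag_mx d *m P.
Proof.
move/hermitian_normalmx/orthomx_spectralP: M_herm => {1}->.
by rewrite invmx_unitary ?spectral_unitarymx.
Qed.

Lemma spectral_trC_mul : P^t* *m P = 1%:M.
Proof.
by rewrite -(invmx_unitary (spectral_unitarymx M)) mulVmx ?spectral_unit.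
Qed.

Lemma spectral_mul_trC : P *m P^t* = 1%:M.
Proof. exact/unitarymxP/spectral_unitarymx. Qed.

Lemma spectral_row_eigen k : row k P *m M = d 0 k *: row k P.
Proof.
rewrite -row_mul {2}spectral_decomp !mulmxA spectral_mul_trC mul1mx.
by rewrite mul_diag_mx; apply/rowP => j; rewrite !mxE.
Qed.

Lemma spectral_row_neq0 k : exists j, P k j != 0.
Proof.
apply/existsP; apply: contraT; rewrite negb_exists => /forallP P_k0.
have := congr1 (fun X : 'M[C]_n => X k k) spectral_mul_trC.
rewrite !mxE eqxx /= big1 ?mulr1n => [/esym/eqP|j _]; first by rewrite oner_eq0.
by move/negPn/eqP: (P_k0 j) => ->; rewrite mul0r.
Qed.

Lemma hermitian_form_shift (E : C) (r : 'rV_n) (w := r *m P^t*) :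
  (r *m M *m r^t*) 0 0 - E * (r *m r^t*) 0 0 =
  \sum_k (d 0 k - E) * (w 0 k * (w 0 k)^*).
Proof.
have rE : r = w *m P by rewrite /w -mulmxA spectral_trC_mul mulmx1.
have rMr : (r *m M *m r^t*) 0 0 = \sum_k d 0 k * (w 0 k * (w 0 k)^*).
  rewrite {1}spectral_decomp !mulmxA -/w rE trmx_mul map_mxM !mulmxA.
  rewrite mulmxtVK ?spectral_unitarymx // mul_mx_diag !mxE.
  by apply: eq_bigr => k _; rewrite !mxE mulrAC mulrC.
have rr : (r *m r^t*) 0 0 = \sum_k w 0 k * (w 0 k)^*.
  rewrite rE trmx_mul map_mxM mulmxA mulmxtVK ?spectral_unitarymx // !mxE.
  by apply: eq_bigr => k _; rewrite !mxE.
rewrite rMr rr mulr_sumr -sumrB; by apply: eq_bigr => k _; rewrite mulrBl.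
Qed.

Section LowerBound.
Variable E : C.
Hypothesis E_le_spectrum : forall k, E <= d 0 k.

Lemma hermitian_form_shift_ge0 (r : 'rV_n) k :
  0 <= (d 0 k - E) * ((r *m P^t*) 0 k * ((r *m P^t*) 0 k)^*).
Proof. by rewrite mulr_ge0 ?subr_ge0 ?mul_conjC_ge0. Qed.

Lemma hermitian_form_ge (r : 'rV_n) : E * (r *m r^t*) 0 0 <= (r *m M *m r^t*) 0 0.
Proof.
by rewrite -subr_ge0 hermitian_form_shift sumr_ge0 // => k _;
  exact: hermitian_form_shift_ge0.
Qed.

Lemma hermitian_form_eq (r : 'rV_n) :
  (r *m M *m r^t*) 0 0 = E * (r *m r^t*) 0 0 -> r *m M = E *: r.
Proof.
move/eqP; rewrite -subr_eq0 hermitian_form_shift => /eqP sum0.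
have /= w_eigen := psumr_eq0P (fun k _ => hermitian_form_shift_ge0 r k) sum0.
set w := r *m P^t* in w_eigen.
have wd : w *m diag_mx d = E *: w.
  apply/rowP => k; rewrite mul_mx_diag mxE [(E *: w) 0 k]mxE.
  have /eqP := w_eigen k isT.
  rewrite mulf_eq0 subr_eq0 mulf_eq0 conjC_eq0 orbb.
  by case/orP => /eqP ->; rewrite ?mulr0 ?mul0r // mulrC.
rewrite {1}spectral_decomp !mulmxA -/w wd -scalemxAl.
by rewrite /w -mulmxA spectral_trC_mul mulmx1.
Qed.

End LowerBound.

End HermitianForm.

Section KernelOperator.
Variables (R : realType) (N : nat).
Local Notation C := R[i].
Local Notation vec := (basis N -> C).
Local Notation n := #|basis N|.

Variables (H : vec -> vec) (K : basis N -> basis N -> C).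
Hypothesis H_kernel : forall v s, H v s = \sum_t v t * K t s.
Hypothesis K_herm : forall s t, (K s t)^* = K t s.

Definition vec_row (v : vec) : 'rV[C]_n := \row_a v (enum_val a).
Definition kernel_mx : 'M[C]_n := \matrix_(a, b) K (enum_val a) (enum_val b).

Lemma vec_rowE v s : vec_row v 0 (enum_rank s) = v s.
Proof. by rewrite mxE enum_rankK. Qed.

Lemma sum_enum_val (F : basis N -> C) : \sum_s F s = \sum_(a < n) F (enum_val a).
Proof. by rewrite -big_enum_val; apply: eq_bigl => s; rewrite inE. Qed.

Lemma vec_row_kernel v : vec_row (H v) = vec_row v *m kernel_mx.
Proof.
apply/rowP => b; rewrite !mxE H_kernel sum_enum_val.
by apply: eq_bigr => a _; rewrite !mxE.
Qed.

Lemma braket_vec_row u v : braket u v = (vec_row v *m (vec_row u)^t*) 0 0.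
Proof.
rewrite /braket sum_enum_val !mxE; apply: eq_bigr => a _.
by rewrite !mxE mulrC.
Qed.

Lemma kernel_mx_herm : kernel_mx \is hermsymmx.
Proof.
by apply/is_hermitianmxP; rewrite expr0 scale1r; apply/matrixP => a b; rewrite !mxE K_herm.
Qed.

Lemma kernel_spectral_eigenpair k :
  eigenpair H (spectral_diag kernel_mx 0 k)
    (fun s => spectralmx kernel_mx k (enum_rank s)).
Proof.
split.
  by have [j Pkj] := spectral_row_neq0 kernel_mx k; exists (enum_val j); rewrite enum_valK.
move=> s; rewrite -[LHS](vec_rowE (H _)) vec_row_kernel.
have -> : vec_row (fun s => spectralmx kernel_mx k (enum_rank s)) = row k (spectralmx kernel_mx).
  by apply/rowP => a; rewrite !mxE enum_valK.
by rewrite spectral_row_eigen ?kernel_mx_herm // !mxE.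
Qed.

Lemma kernel_braket_real u : braket u (H u) \is Num.real.
Proof.
have -> : braket u (H u) = \sum_s \sum_t (u s)^* * u t * K t s.
  apply: eq_bigr => s _; rewrite H_kernel mulr_sumr.
  by apply: eq_bigr => t _; rewrite mulrA.
apply/CrealP; rewrite rmorph_sum [RHS]exchange_big /=.
apply: eq_bigr => s _; rewrite rmorph_sum; apply: eq_bigr => t _.
by rewrite !rmorphM /= conjCK K_herm [u s * _]mulrC.
Qed.

Section GroundEnergy.
Variable E : C.
Hypothesis E_ground : forall E' phi, eigenpair H E' phi -> E <= E'.

Lemma ground_le_spectrum k : E <= spectral_diag kernel_mx 0 k.
Proof. exact: E_ground (kernel_spectral_eigenpair k). Qed.

Lemma kernel_rayleigh_ge phi : E * braket phi phi <= braket phi (H phi).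
Proof.
rewrite !braket_vec_row vec_row_kernel.
exact: (hermitian_form_ge kernel_mx_herm ground_le_spectrum).
Qed.

Lemma kernel_rayleigh_eq phi :
  braket phi (H phi) = E * braket phi phi -> forall s, H phi s = E * phi s.
Proof.
rewrite !braket_vec_row vec_row_kernel => /(hermitian_form_eq kernel_mx_herm ground_le_spectrum).
move=> eigen s; rewrite -[LHS]vec_rowE vec_row_kernel eigen !mxE.
by rewrite enum_rankK.
Qed.

End GroundEnergy.

End KernelOperator.

Lemma braket_eigen (R : realType) N (H : (basis N -> R[i]) -> basis N -> R[i]) E u v :
  (forall s, H v s = E * v s) -> braket u (H v) = E * braket u v.
Proof.
by move=> Hv; rewrite /braket mulr_sumr; apply: eq_bigr => s _; rewrite Hv mulrCA.
Qed.

Section Hamiltonian.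
Variables (R : realType) (N : nat).
Local Notation C := R[i].
Local Notation vec := (basis N -> C).
Implicit Types (Om del : R) (J : 'I_N -> 'I_N -> R) (v : vec) (s t : basis N).

Definition zsign (i : 'I_N) s : R := if s i then -1 else 1.

Definition zz_energy J s : R :=
  \sum_(i < N) \sum_(j < N | (i < j)%N) J i j * (zsign i s * zsign j s).

Definition diag_energy del J s : R := del * \sum_(i < N) zsign i s + zz_energy J s.

Lemma sigzE i v s : sigz i v s = (zsign i s)%:C * v s.
Proof. by rewrite /sigz /zsign; case: (s i); rewrite ?rmorphN rmorph1. Qed.

Lemma ham_flipE Om del J v s :
  ham Om del J v s = Om%:C * \sum_i v (flip i s) + (diag_energy del J s)%:C * v s.
Proof.
rewrite /ham /sigx /diag_energy /zz_energy -addrA rmorphD mulrDl !rmorphM -mulrA.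
congr (_ + (_ * _ + _)).
  by rewrite rmorph_sum mulr_suml; apply: eq_bigr => i _; rewrite sigzE.
rewrite !rmorph_sum mulr_suml; apply: eq_bigr => i _.
rewrite rmorph_sum mulr_suml; apply: eq_bigr => j _.
by rewrite !sigzE !rmorphM !mulrA [_ * (zsign i s)%:C]mulrC.
Qed.

Lemma sum_mul_delta v s : \sum_t v t * ((s == t)%:R : C) = v s.
Proof.
rewrite (bigD1 s) //= eqxx mulr1 big1 ?addr0 // => t /negPf.
by rewrite eq_sym => ->; rewrite mulr0.
Qed.

Definition ham_kernel Om del J t s : C :=
  (Om * \sum_i (flip i s == t)%:R + diag_energy del J s * (s == t)%:R)%:C.

Lemma ham_kernelE Om del J v s : ham Om del J v s = \sum_t v t * ham_kernel Om del J t s.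
Proof.
under eq_bigr do rewrite /ham_kernel rmorphD !rmorphM rmorph_sum !rmorph_nat mulrDr.
rewrite big_split /= ham_flipE; congr (_ + _); last first.
  under eq_bigr do rewrite mulrCA; rewrite -mulr_sumr.
  by congr (_ * _); exact/esym/sum_mul_delta.
under eq_bigr do rewrite mulrCA mulr_sumr; rewrite -mulr_sumr exchange_big /=.
congr (_ * _); apply: eq_bigr => i _.
by under eq_bigr do rewrite rmorph_nat; exact/esym/sum_mul_delta.
Qed.

Lemma flipK (i : 'I_N) : involutive (flip i).
Proof.
by move=> s; apply/ffunP => k; rewrite !ffunE; case: eqP => // ->; rewrite negbK.
Qed.

Lemma ham_kernel_herm Om del J s t : (ham_kernel Om del J s t)^* = ham_kernel Om del J t s.
Proof.
rewrite /ham_kernel conj_Creal ?real_complex_real //; congr (_ %:C); congr (_ * _ + _).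
  apply: eq_bigr => i _.
  by rewrite (can2_eq (flipK i) (flipK i)) eq_sym.
by case: eqP => [->|/nesym/eqP/negPf ->]; rewrite ?eqxx ?mulr0.
Qed.

End Hamiltonian.

Arguments zsign {R N} i s.

Lemma flip_closed_all N (P : basis N -> Prop) :
  (forall s i, P s -> P (flip i s)) -> forall s t, P s -> P t.
Proof.
move=> P_flip s t; move Hk: #|[set i | s i != t i]| => k.
elim: k s Hk => [|k IH] s Hk Ps.
  suff -> : t = s by [].
  apply/ffunP => i; apply/eqP; rewrite eq_sym; apply: contraT => Di.
  by move/eqP: Hk; rewrite cards_eq0 => /eqP/setP/(_ i); rewrite !inE Di.
have : (0 < #|[set i | s i != t i]|)%N by rewrite Hk.
case/card_gt0P => i; rewrite inE => Di.
apply: (IH (flip i s)) (P_flip _ _ Ps).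
have -> : [set j | flip i s j != t j] = [set j | s j != t j] :\ i.
  apply/setP => j; rewrite !inE ffunE; case: (eqVneq j i) => [->|] //=.
  by move: Di; case: (s i); case: (t i).
by move: Hk; rewrite (cardsD1 i) inE Di add1n => -[].
Qed.

Section SignedModulus.
Variables (R : realType) (N : nat) (Om del : R) (J : 'I_N -> 'I_N -> R).
Local Notation C := R[i].
Local Notation vec := (basis N -> C).
Local Notation H := (ham Om del J).

Definition hopping (u : vec) : C := \sum_s \sum_(i < N) (u s)^* * u (flip i s).

Definition diag_expectation (u : vec) : C :=
  \sum_s (diag_energy del J s)%:C * ((u s)^* * u s).

Lemma braket_hamE u : braket u (H u) = Om%:C * hopping u + diag_expectation u.
Proof.
rewrite /braket /hopping /diag_expectation mulr_sumr -big_split /=.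
apply: eq_bigr => s _; rewrite ham_flipE mulrDr mulrCA [X in _ + X]mulrCA.
by rewrite mulr_sumr.
Qed.

Lemma diag_expectation_real u : diag_expectation u \is Num.real.
Proof.
apply: rpred_sum => s _; apply: rpredM; first exact: real_complex_real.
by rewrite mulrC; exact/ger0_real/mul_conjC_ge0.
Qed.

Variable eps : R.
Hypothesis eps_sqr : eps * eps = 1.
Hypothesis Om_eps : Om * eps = - `|Om|.

Definition parity_sign (s : basis N) : R := \prod_(i < N) (if s i then eps else 1).

Lemma parity_sign_sqr s : parity_sign s * parity_sign s = 1.
Proof.
by rewrite -big_split big1 // => i _ /=; case: (s i); rewrite ?eps_sqr ?mulr1.
Qed.

Lemma parity_sign_flip s i : parity_sign (flip i s) = eps * parity_sign s.
Proof.
rewrite /parity_sign (bigD1 i) //= [in RHS](bigD1 i) //= ffunE eqxx.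
rewrite (eq_bigr (fun j => if s j then eps else 1)) => [|j /negPf ji]; last first.
  by rewrite ffunE ji.
by case: (s i); rewrite /= ?mul1r ?mulrA ?eps_sqr ?mul1r.
Qed.

Definition signed_modulus (u : vec) : vec := fun s => (parity_sign s)%:C * `|u s|.

Lemma signed_modulus_conj u s : (signed_modulus u s)^* = signed_modulus u s.
Proof. by apply: conj_Creal; rewrite rpredM ?real_complex_real ?ger0_real. Qed.

Lemma signed_modulus_normsq u s :
  (signed_modulus u s)^* * signed_modulus u s = (u s)^* * u s.
Proof.
rewrite signed_modulus_conj mulrACA -rmorphM parity_sign_sqr mul1r.
by rewrite -normCKC expr2.
Qed.

Lemma braket_signed_modulus u : braket (signed_modulus u) (signed_modulus u) = braket u u.
Proof. by apply: eq_bigr => s _; rewrite signed_modulus_normsq. Qed.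

Lemma diag_expectation_signed_modulus u :
  diag_expectation (signed_modulus u) = diag_expectation u.
Proof. by apply: eq_bigr => s _; rewrite signed_modulus_normsq. Qed.

Lemma hopping_signed_modulus u : Om%:C * hopping (signed_modulus u) =
  - `|Om|%:C * \sum_s \sum_(i < N) `|u s| * `|u (flip i s)|.
Proof.
rewrite -rmorphN -Om_eps rmorphM -mulrA; congr (_ * _); rewrite mulr_sumr.
apply: eq_bigr => s _; rewrite mulr_sumr; apply: eq_bigr => i _.
rewrite signed_modulus_conj /signed_modulus parity_sign_flip mulrACA -rmorphM.
by rewrite [parity_sign s * _]mulrCA parity_sign_sqr mulr1.
Qed.

Lemma norm_hopping_le u :
  `|Om%:C * hopping u| <= `|Om|%:C * \sum_s \sum_(i < N) `|u s| * `|u (flip i s)|.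
Proof.
rewrite normrM normc_def /= expr0n /= addr0 sqrtr_sqr ler_wpM2l ?ler0c //.
apply: le_trans (ler_norm_sum _ _ _) _; apply: ler_sum => s _.
apply: le_trans (ler_norm_sum _ _ _) _; apply: ler_sum => i _.
by rewrite normrM norm_conjC.
Qed.

Lemma rayleigh_signed_modulus_le u : braket u (H u) \is Num.real ->
  braket (signed_modulus u) (H (signed_modulus u)) <= braket u (H u).
Proof.
rewrite !braket_hamE diag_expectation_signed_modulus lerD2r hopping_signed_modulus.
move=> real_u; rewrite mulNr; apply: real_lerNnormlW; last exact: norm_hopping_le.
by rewrite -(addrK (diag_expectation u) (_ * _)) rpredB ?diag_expectation_real.
Qed.

Lemma signed_modulus_eigen_zero u E s i : Om != 0 ->
  (forall t, H (signed_modulus u) t = E * signed_modulus u t) ->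
  u s = 0 -> u (flip i s) = 0.
Proof.
move=> Om0 eigen us0.
have sqr1_neq0 (x : R) : x * x = 1 -> x != 0.
  by move=> xx; apply/eqP => x0; move: xx; rewrite x0 mulr0 => /eqP; rewrite eq_sym oner_eq0.
have sign_neq0 := mulf_neq0 (sqr1_neq0 _ eps_sqr) (sqr1_neq0 _ (parity_sign_sqr s)).
have phis0 : signed_modulus u s = 0 by rewrite /signed_modulus us0 normr0 mulr0.
have /eqP := eigen s; rewrite ham_flipE phis0 !mulr0 addr0 mulf_eq0.
case/orP => [/eqP/(congr1 (@complex.Re R)) /= Om_0|]; first by rewrite Om_0 eqxx in Om0.
rewrite /signed_modulus; under eq_bigr do rewrite parity_sign_flip.
rewrite -mulr_sumr mulf_eq0 => /orP [/eqP/(congr1 (@complex.Re R)) /= sign0|/eqP sum0].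
  by rewrite sign0 eqxx in sign_neq0.
have /(_ i isT)/eqP := psumr_eq0P (fun j _ => normr_ge0 (u (flip j s))) sum0.
by rewrite normr_eq0 => /eqP.
Qed.

End SignedModulus.

Lemma ground_state_neq0 (R : realType) N Om del J (psi : basis N -> R[i]) :
  Om != 0 -> ground_state (ham Om del J) psi -> forall s, psi s != 0.
Proof.
move=> Om0 [psi1 [E [[[s0 psi_s0] psi_eigen] E_ground]]].
pose eps := - Num.sg Om.
have eps_sqr : eps * eps = 1 by rewrite mulrNN -expr2 sqr_sg Om0.
have Om_eps : Om * eps = - `|Om| by rewrite mulrN mulrC -normrEsg.
have ham_rep := ham_kernelE Om del J.
have ham_herm := @ham_kernel_herm R N Om del J.
have E_psi : braket psi (ham Om del J psi) = E by rewrite (braket_eigen _ psi_eigen) psi1 mulr1.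
pose phi := signed_modulus eps psi.
have phi_min : braket phi (ham Om del J phi) = E * braket phi phi.
  apply/le_anti; rewrite (kernel_rayleigh_ge ham_rep ham_herm E_ground) andbT.
  rewrite /phi (braket_signed_modulus eps_sqr) psi1 mulr1 -E_psi.
  exact: (rayleigh_signed_modulus_le eps_sqr Om_eps (kernel_braket_real ham_rep ham_herm psi)).
have phi_eigen := kernel_rayleigh_eq ham_rep ham_herm E_ground phi_min.
move=> s; apply: contra_neq psi_s0 => psi_s.
apply: (@flip_closed_all _ (fun t => psi t = 0) _ s) psi_s => t i.
exact: (signed_modulus_eigen_zero eps_sqr i Om0 phi_eigen).
Qed.

Section CouplingDifference.
Variables (R : realType) (N : nat).
Local Notation C := R[i].
Local Notation vec := (basis N -> C).
Implicit Types (J K : 'I_N -> 'I_N -> R) (u : vec) (s : basis N).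

Definition zz_corr u (i j : 'I_N) : C := braket u (sigz i (sigz j u)).

Lemma corr_zz hbar u i j : corr hbar u i j = (hbar / 2)%:C ^+ 2 * zz_corr u i j.
Proof.
rewrite /corr /zz_corr /braket mulr_sumr; apply: eq_bigr => s _.
by rewrite /Sz !sigzE; ring.
Qed.

Definition zz_expectation K u : C := \sum_s (zz_energy K s)%:C * ((u s)^* * u s).

Lemma zz_expectation_corr K u :
  zz_expectation K u = \sum_(i < N) \sum_(j < N | (i < j)%N) (K i j)%:C * zz_corr u i j.
Proof.
rewrite /zz_expectation /zz_energy.
under eq_bigr do rewrite rmorph_sum mulr_suml.
rewrite exchange_big; apply: eq_bigr => i _ /=.
under eq_bigr do rewrite rmorph_sum mulr_suml.
rewrite exchange_big; apply: eq_bigr => j _ /=.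
rewrite /zz_corr /braket mulr_sumr; apply: eq_bigr => s _.
by rewrite !sigzE !rmorphM; ring.
Qed.

Variables (Om del : R) (J1 J2 : 'I_N -> 'I_N -> R).
Let K := fun i j => J1 i j - J2 i j.

Lemma ham_couplingB u s :
  ham Om del J1 u s = ham Om del J2 u s + (zz_energy K s)%:C * u s.
Proof.
rewrite !ham_flipE -addrA -mulrDl -rmorphD; congr (_ + (_%:C * _)).
rewrite /diag_energy -addrA; congr (_ + _); rewrite /zz_energy -big_split.
apply: eq_bigr => i _ /=; rewrite -big_split; apply: eq_bigr => j _ /=.
by rewrite /K; ring.
Qed.

Lemma braket_ham_couplingB u :
  braket u (ham Om del J1 u) = braket u (ham Om del J2 u) + zz_expectation K u.
Proof.
rewrite /braket /zz_expectation -big_split; apply: eq_bigr => s _ /=.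
by rewrite ham_couplingB mulrDr mulrCA.
Qed.

Lemma ground_state_zz_eigen psi1 psi2 :
  ground_state (ham Om del J1) psi1 -> ground_state (ham Om del J2) psi2 ->
  (forall i j : 'I_N, (i < j)%N -> zz_corr psi1 i j = zz_corr psi2 i j) ->
  exists c, forall s, (zz_energy K s)%:C * psi2 s = c * psi2 s.
Proof.
move=> [psi1_1 [E1 [[_ psi1_eigen] E1_ground]]] [psi2_1 [E2 [[_ psi2_eigen] E2_ground]]] zz12.
have rep1 := ham_kernelE Om del J1; have herm1 := @ham_kernel_herm R N Om del J1.
have rep2 := ham_kernelE Om del J2; have herm2 := @ham_kernel_herm R N Om del J2.
have g12 : zz_expectation K psi1 = zz_expectation K psi2.
  rewrite !zz_expectation_corr; apply: eq_bigr => i _.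
  by apply: eq_bigr => j ij; rewrite zz12.
have E1_psi1 : braket psi1 (ham Om del J1 psi1) = E1.
  by rewrite (braket_eigen _ psi1_eigen) psi1_1 mulr1.
have E2_psi2 : braket psi2 (ham Om del J2 psi2) = E2.
  by rewrite (braket_eigen _ psi2_eigen) psi2_1 mulr1.
have le1 := kernel_rayleigh_ge rep1 herm1 E1_ground psi2.
have le2 := kernel_rayleigh_ge rep2 herm2 E2_ground psi1.
rewrite braket_ham_couplingB E2_psi2 psi2_1 mulr1 in le1.
rewrite psi1_1 mulr1 -[braket psi1 _](addrK (zz_expectation K psi1)) in le2.
rewrite -braket_ham_couplingB E1_psi1 g12 lerBrDr in le2.
have psi2_min : braket psi2 (ham Om del J1 psi2) = E1 * braket psi2 psi2.
  by rewrite braket_ham_couplingB E2_psi2 psi2_1 mulr1; apply/le_anti; rewrite le1 le2.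
exists (E1 - E2) => s; rewrite mulrBl -(psi2_eigen s).
by rewrite -(kernel_rayleigh_eq rep1 herm1 E1_ground psi2_min) ham_couplingB addrC addKr.
Qed.

End CouplingDifference.

Section FourPoint.
Variables (R : realType) (N : nat) (K : 'I_N -> 'I_N -> R) (i j : 'I_N).
Hypothesis ij : (i < j)%N.

Definition spin_pair (x y : bool) : basis N := [ffun k => (x && (k == i)) || (y && (k == j))].

Lemma zz_term_four_point (k l : 'I_N) : (k < l)%N ->
  let z x y := K k l * (zsign k (spin_pair x y) * zsign l (spin_pair x y)) in
  z false false - z true false - z false true + z true true =
  if (k == i) && (l == j) then 4 * K k l else 0.
Proof.
move=> kl /=; rewrite /zsign !ffunE -!val_eqE /=.
by do 4![case: eqP => ? /=]; try (exfalso; lia); ring.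
Qed.

Lemma zz_energy_four_point :
  zz_energy K (spin_pair false false) - zz_energy K (spin_pair true false)
  - zz_energy K (spin_pair false true) + zz_energy K (spin_pair true true) = 4 * K i j.
Proof.
rewrite /zz_energy -!sumrB -big_split /=.
under eq_bigr => k _ do rewrite -!sumrB -big_split /=.
under eq_bigr => k _ do under eq_bigr => l kl do rewrite (zz_term_four_point kl).
rewrite (bigD1 i) //= [X in _ + X]big1 => [|k /negPf ki]; last first.
  by apply: big1 => l _; rewrite ki.
rewrite (bigD1 j) //= !eqxx big1 ?addr0 // => l /andP [_ /negPf lj].
by rewrite lj andbF.
Qed.

End FourPoint.

Lemma zz_energy_const_eq0 (R : realType) N (K : 'I_N -> 'I_N -> R) :
  (forall s t, zz_energy K s = zz_energy K t) -> forall i j : 'I_N, (i < j)%N -> K i j = 0.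
Proof.
move=> K_const i j ij; have := zz_energy_four_point K ij.
rewrite !(K_const _ (spin_pair i j false false)) subrr sub0r addNr => /esym/eqP.
by rewrite mulf_eq0 pnatr_eq0 => /eqP.
Qed.

Theorem mainTheorem4 (R : realType) (N : nat) (hbar Om del : R)
    (J1 J2 : 'I_N -> 'I_N -> R) (psi1 psi2 : basis N -> R[i]) :
  (2 <= N)%N -> 0 < hbar -> Om != 0 ->
  ground_state (ham Om del J1) psi1 ->
  ground_state (ham Om del J2) psi2 ->
  (forall i j : 'I_N, (i < j)%N -> corr hbar psi1 i j = corr hbar psi2 i j) ->
  forall i j : 'I_N, (i < j)%N -> J1 i j = J2 i j.
Proof.
move=> _ hbar_gt0 Om0 gs1 gs2 corr12 i j ij.
have zz12 (k l : 'I_N) : (k < l)%N -> zz_corr psi1 k l = zz_corr psi2 k l.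
  move=> kl; apply: (mulfI (_ : (hbar / 2)%:C ^+ 2 != 0)); last by rewrite -!corr_zz corr12.
  rewrite expf_eq0 /= -(rmorph0 (real_complex R)); apply: contra_neq (@complexI R _ _) _.
  by rewrite gt_eqF // divr_gt0.
have [c zz_eigen] := ground_state_zz_eigen gs1 gs2 zz12.
set K := fun k l => J1 k l - J2 k l in zz_eigen.
have zz_c s : (zz_energy K s)%:C = c := mulIf (ground_state_neq0 Om0 gs2 s) (zz_eigen s).
have zz_const s t : zz_energy K s = zz_energy K t by apply: (@complexI R); rewrite !zz_c.
by apply/eqP; rewrite -subr_eq0; apply/eqP; exact: zz_energy_const_eq0 zz_const i j ij.
Qed.
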